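(* For every integer $k>1$ and every integer $1\le\Delta\le k$, there exists a finite instance $\mathbf{X}\subset\mathbb{R}^d$ such that, with probability at least $1-e^{-\sqrt{k}/2}$, the set $C_{k+\Delta}$ of the first $k+\Delta$ centers chosen by $k$-means++ seeding satisfies $$\mathrm{cost}(\mathbf{X},C_{k+\Delta})>\frac18\ln\frac{k}{\Delta}\cdot\mathrm{OPT}_k(\mathbf{X}).$$
   Context: $\mathrm{cost}(x,C)=\min_{c\in C}\|x-c\|^2$, $\mathrm{cost}(\mathbf{Y},C)=\sum_{x\in\mathbf{Y}}\mathrm{cost}(x,C)$, $\mathrm{OPT}_k(\mathbf{X})=\min_{|C|=k}\mathrm{cost}(\mathbf{X},C)$. $k$-means++ seeding: $c_1$ uniform from $\mathbf{X}$, $C_1=\{c_1\}$; $C_{t+1}=C_t\cup\{x\}$ with $x$ chosen with probability $\mathrm{cost}(x,C_t)/\mathrm{cost}(\mathbf{X},C_t)$. *)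

From HB Require Import structures.
From mathcomp Require Import all_boot all_order all_algebra.
From mathcomp Require Import all_classical all_reals all_analysis.
Set Implicit Arguments. Unset Strict Implicit. Unset Printing Implicit Defensive.
Import Order.TTheory GRing.Theory Num.Theory.
Local Open Scope classical_set_scope.
Local Open Scope ring_scope.

Section KMeans.
Variables (R : realType) (d : nat).
Implicit Types (x c : 'rV[R]_d) (X C : seq 'rV[R]_d).

Definition sqdist x c : R := \sum_(i < d) (x ord0 i - c ord0 i) ^+ 2.

(* cost(x, C) = min_{c in C} ||x - c||^2  (convention: 0 if C is empty,
   never used in the statement) *)
Definition cost_pt x C : R :=
  match C with
  | [::] => 0
  | c :: C' => foldr (fun c' m => Num.min (sqdist x c') m) (sqdist x c) C'
  end.

Definition cost X C : R := \sum_(x <- X) cost_pt x C.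

Definition OPT (k : nat) X : R :=
  inf [set cost X C | C in [set C : seq 'rV[R]_d | uniq C /\ size C = k]].

Definition seed_step X C x : R :=
  if C is [::] then (size X)%:R^-1 else cost_pt x C / cost X C.

Definition seed_prob X (s : seq 'rV[R]_d) : R :=
  \prod_(i < size s) seed_step X (take i s) (nth 0 s i).

(* probability that the set C_m of the first m k-means++ centers satisfies E.
   Points of X are indexed by 'I_(size X); X is assumed duplicate-free. *)
Definition kmpp_prob X (m : nat) (E : seq 'rV[R]_d -> bool) : R :=
  \sum_(t : m.-tuple 'I_(size X))
     let s := [seq nth 0 X (val i) | i <- t] in seed_prob X s * (E s)%:R.

End KMeans.

From HB Require Import structures.
From mathcomp Require Import all_boot all_order all_algebra.
From mathcomp Require Import all_classical all_reals all_analysis.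
From mathcomp Require Import ring lra zify.
Import Order.TTheory GRing.Theory Num.Theory.
Local Open Scope ring_scope.
Set Implicit Arguments. Unset Strict Implicit. Unset Printing Implicit Defensive.

(* Instance: in R^(N + k - 1), the N = 2k + 4k^2 light points e_i and the k - 1
   heavy points sqrt A e_i, with A s = 4k^2 where s = sqrt k + D.  All points are
   mutually orthogonal, so OPT_k <= N (centers 0 and the heavy points).  While
   u heavy points are still unchosen, the cost is at least 8k^2 + A u and the
   next center is one of them with probability at most u / (u + s).

   Hence the potential (2/3)^|t| / damping (u + 1), with
   damping a = (2/3)^(k-a) prod_(a <= v < k) (1 - s / (3 (s + v))),
   is a supermartingale of the seeding process, and Markov's inequality bounds
   the probability that fewer than s (L - 3/2) heavy points remain unchosen,
   the only way the event can fail, by exp (- sqrt k / 2). *)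

Lemma sum_tuple_rcons (R : nmodType) (T : finType) m (F : seq T -> R) :
  \sum_(t : m.+1.-tuple T) F t = \sum_(t : m.-tuple T) \sum_(i : T) F (rcons t i).
Proof.
rewrite pair_bigA /=.
pose split_last (t : m.+1.-tuple T) :=
  (belast_tuple (thead t) (behead_tuple t), last (thead t) (behead t)).
rewrite (reindex (fun p : m.-tuple T * T => rcons_tuple p.1 p.2)) //.
exists split_last => [[t i] _ | t _]; last first.
  by apply: val_inj => /=; rewrite -lastI; have := congr1 val (tuple_eta t).
case: t => [[|y t'] /= ht]; first by congr pair; apply: val_inj.
by congr pair; [apply: val_inj; rewrite /= belast_rcons | rewrite /= last_rcons].
Qed.

Lemma ler_sum_subpred (R : numDomainType) (I : finType) (P Q : pred I) (F : I -> R) :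
  (forall i, Q i -> P i) -> (forall i, P i -> 0 <= F i) ->
  \sum_(i | Q i) F i <= \sum_(i | P i) F i.
Proof.
move=> QP F0; rewrite [X in _ <= X](bigID Q) /=.
rewrite (eq_bigl Q); last by move=> i; case: (boolP (Q i)) => Qi; rewrite ?andbT ?andbF ?QP.
by rewrite lerDl; apply: sumr_ge0 => i /andP[/F0].
Qed.

Section Costs.
Variables (R : realType) (d : nat).
Implicit Types (x c : 'rV[R]_d) (X C : seq 'rV[R]_d).

Lemma sqdist_ge0 x c : 0 <= sqdist x c.
Proof. by apply: sumr_ge0 => i _; exact: sqr_ge0. Qed.

Lemma sqdist_xx x : sqdist x x = 0.
Proof. by rewrite /sqdist big1 // => i _; rewrite subrr expr0n. Qed.

Lemma cost_pt_le x C c : c \in C -> cost_pt x C <= sqdist x c.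
Proof.
case: C => [|c0 C] //=; elim: C => [|c1 C IH] /=; first by rewrite inE => /eqP->.
rewrite !inE => /or3P[c_c0 | /eqP-> | cC]; rewrite ge_min ?lexx //.
  by rewrite IH ?orbT // inE c_c0.
by rewrite IH ?orbT // inE cC orbT.
Qed.

Lemma cost_pt_ge x C m : C != [::] -> (forall c, c \in C -> m <= sqdist x c) ->
  m <= cost_pt x C.
Proof.
case: C => [|c0 C] //= _; elim: C => [|c1 C IH] /= mC; first by rewrite mC ?mem_head.
rewrite le_min mC ?inE ?eqxx ?orbT // IH // => c; rewrite inE => /orP[/eqP-> | cC].
  exact/mC/mem_head.
by apply: mC; rewrite !inE cC !orbT.
Qed.

Lemma cost_pt_ge0 x C : 0 <= cost_pt x C.
Proof.
case: C => [//|c C]; apply: cost_pt_ge => // c' _; exact: sqdist_ge0.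
Qed.

Lemma cost_pt_mem x C : x \in C -> cost_pt x C = 0.
Proof.
move=> xC; apply/eqP; rewrite eq_le cost_pt_ge0 andbT.
by rewrite -(sqdist_xx x) cost_pt_le.
Qed.

Lemma cost_ge0 X C : 0 <= cost X C.
Proof. by apply: sumr_ge0 => x _; exact: cost_pt_ge0. Qed.

Lemma OPT_le_cost k X C : uniq C -> size C = k -> OPT k X <= cost X C.
Proof.
move=> uC sC; apply: ge_inf; last by exists C.
by exists 0 => _ [C' _ <-]; exact: cost_ge0.
Qed.

End Costs.

Section Seeding.
Variables (R : realType) (d : nat) (X : seq 'rV[R]_d).
Local Notation n := (size X).

Definition centers (t : seq 'I_n) : seq 'rV[R]_d := [seq nth 0 X (val j) | j <- t].

Lemma seed_step_ge0 C x : 0 <= seed_step X C x.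
Proof.
case: C => [|c C] /=; first by rewrite invr_ge0.
by apply: divr_ge0; [exact: (cost_pt_ge0 x (c :: C)) | exact: cost_ge0].
Qed.

Lemma seed_prob_ge0 s : 0 <= seed_prob X s.
Proof. by apply: prodr_ge0 => i _; exact: seed_step_ge0. Qed.

Lemma seed_prob_rcons s x : seed_prob X (rcons s x) = seed_prob X s * seed_step X s x.
Proof.
rewrite /seed_prob size_rcons big_ord_recr /= -cats1 take_size_cat //.
rewrite nth_cat ltnn subnn; congr (_ * _); apply: eq_bigr => i _.
by rewrite takel_cat ?nth_cat ?ltn_ord // ltnW.
Qed.

Definition kmpp_expect (m : nat) (Psi : seq 'I_n -> R) : R :=
  \sum_(t : m.-tuple 'I_n) seed_prob X (centers t) * Psi t.

Lemma kmpp_expectS m Psi :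
  kmpp_expect m.+1 Psi = kmpp_expect m
    (fun t => \sum_(i : 'I_n) seed_step X (centers t) (nth 0 X i) * Psi (rcons t i)).
Proof.
rewrite /kmpp_expect (@sum_tuple_rcons _ _ m (fun t => seed_prob X (centers t) * Psi t)).
apply: eq_bigr => t _; rewrite mulr_sumr; apply: eq_bigr => i _.
by rewrite /centers map_rcons seed_prob_rcons mulrA.
Qed.

Lemma kmpp_expect_le m Psi :
  (forall t : seq 'I_n, (size t < m)%N ->
     \sum_(i : 'I_n) seed_step X (centers t) (nth 0 X i) * Psi (rcons t i) <= Psi t) ->
  kmpp_expect m Psi <= Psi [::].
Proof.
elim: m => [|m IH] super.
  rewrite /kmpp_expect (big_pred1 [tuple]); last by move=> t; symmetry; apply/eqP; exact: tuple0.
  by rewrite /seed_prob big_ord0 mul1r.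
rewrite kmpp_expectS; apply: le_trans (IH _) => [|t tm]; last exact/super/ltnW.
apply: ler_sum => t _; apply: ler_wpM2l; first exact: seed_prob_ge0.
by apply: super; rewrite size_tuple.
Qed.

Lemma kmpp_expect_ge m Psi :
  (forall t : seq 'I_n, (size t < m)%N ->
     Psi t <= \sum_(i : 'I_n) seed_step X (centers t) (nth 0 X i) * Psi (rcons t i)) ->
  Psi [::] <= kmpp_expect m Psi.
Proof.
move=> sub; rewrite -lerN2 /kmpp_expect -sumrN.
under eq_bigr => t _ do rewrite -mulrN.
apply: (kmpp_expect_le (Psi := fun t => - Psi t)) => t tm.
by under eq_bigr => i _ do rewrite mulrN; rewrite sumrN lerN2 sub.
Qed.

Lemma kmpp_markov m (E : pred (seq 'rV[R]_d)) (Psi : seq 'I_n -> R) (c : R) :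
  0 < c -> (forall t, 0 <= Psi t) ->
  (forall t : seq 'I_n, (size t < m)%N ->
     \sum_(i : 'I_n) seed_step X (centers t) (nth 0 X i) = 1) ->
  (forall t : seq 'I_n, (size t < m)%N ->
     \sum_(i : 'I_n) seed_step X (centers t) (nth 0 X i) * Psi (rcons t i) <= Psi t) ->
  (forall t : m.-tuple 'I_n, ~~ E (centers t) -> c <= Psi t) ->
  1 - Psi [::] / c <= kmpp_prob X m E.
Proof.
move=> c0 Psi0 mass super failE.
have total : 1 <= kmpp_expect m (fun _ => 1).
  by apply: kmpp_expect_ge => t tm; under eq_bigr => i _ do rewrite mulr1; rewrite mass.
have expectPsi : kmpp_expect m Psi / c <= Psi [::] / c.
  by rewrite ler_pM2r ?invr_gt0 // kmpp_expect_le.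
apply: le_trans (_ : kmpp_expect m (fun t => 1 - Psi t / c) <= _).
  rewrite /kmpp_expect in total expectPsi *.
  under eq_bigr => t _ do rewrite mulrBr mulrA.
  by rewrite sumrB -[X in _ <= _ - X]mulr_suml lerB.
rewrite /kmpp_expect /kmpp_prob /=; apply: ler_sum => t _.
apply: ler_wpM2l; first exact: seed_prob_ge0.
case: (boolP (E _)) => Et /=.
  by rewrite lerBlDr lerDl divr_ge0 ?Psi0 ?ltW.
by rewrite subr_le0 ler_pdivlMr // mul1r failE.
Qed.

End Seeding.

Arguments centers {R d} X t.

Section Counting.
Local Open Scope nat_scope.

Lemma card_ord_lt (n N : nat) : N <= n -> #|[pred i : 'I_n | i < N]| = N.
Proof.
move=> Nn; rewrite -sum1_card.
have := big_ord_widen_cond (op := addn) (idx := 0) n xpredT (fun _ => 1) Nn.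
rewrite /= sum1_card card_ord => widen.
by rewrite [in RHS]widen; apply: eq_bigl.
Qed.

Lemma card_ord_ge (n N : nat) : N <= n -> #|[pred i : 'I_n | N <= i]| = n - N.
Proof.
move=> Nn; have := cardC [pred i : 'I_n | i < N]; rewrite card_ord_lt // card_ord.
move/(congr1 (subn^~ N)); rewrite addKn => <-.
by apply: eq_card => i; rewrite !inE /= -ltnNge.
Qed.

Lemma card_ord_lt_notin (n N : nat) (t : seq 'I_n) : N <= n ->
  N - size t <= #|[pred i : 'I_n | (i < N) && (i \notin t)]|.
Proof.
move=> Nn; have := cardID (mem t) [pred i : 'I_n | i < N]; rewrite card_ord_lt //.
have in_t : #|[predI [pred i : 'I_n | i < N] & mem t]| <= size t.
  apply: leq_trans (card_size t); apply: subset_leq_card.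
  by apply/fintype.subsetP => i; rewrite !inE => /andP[].
have -> : #|[predD [pred i : 'I_n | i < N] & mem t]| =
          #|[pred i : 'I_n | (i < N) && (i \notin t)]|.
  by apply: eq_card => i; rewrite !inE andbC.
by move=> partition; rewrite -[N in N - size t]partition leq_subLR leq_add2r.
Qed.

End Counting.

Section WeightedBasis.
Variables (R : realType) (N K : nat) (A : R).
Hypothesis A_ge1 : 1 <= A.
Local Notation d := (N + K)%N.

Definition weight (i : nat) : R := if (i < N)%N then 1 else Num.sqrt A.

Definition basis_pt (i : nat) : 'rV[R]_d :=
  \row_(l < d) (if (l : nat) == i then weight i else 0).

Definition weighted_basis : seq 'rV[R]_d := map basis_pt (iota 0 d).

Lemma weight2 i : weight i ^+ 2 = if (i < N)%N then 1 else A.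
Proof.
by rewrite /weight; case: ifP => _; rewrite ?expr1n // sqr_sqrtr // (le_trans ler01).
Qed.

Lemma weight2_ge1 i : 1 <= weight i ^+ 2.
Proof. by rewrite weight2; case: ifP. Qed.

Lemma weight2_leA i : weight i ^+ 2 <= A.
Proof. by rewrite weight2; case: ifP. Qed.

Lemma weight_neq0 i : weight i != 0.
Proof. by apply/eqP => wi0; have := weight2_ge1 i; rewrite wi0 expr0n ler10. Qed.

Lemma sum_delta (i : nat) (c : R) : (i < d)%N ->
  \sum_(l < d) (if (l : nat) == i then c else 0) = c.
Proof.
move=> id; rewrite (bigD1 (Ordinal id)) //= eqxx big1 ?addr0 // => l li.
by case: eqP => // eq_li; rewrite -val_eqE /= eq_li eqxx in li.
Qed.

Lemma sqdist_basis i j : (i < d)%N -> (j < d)%N ->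
  sqdist (basis_pt i) (basis_pt j) = if i == j then 0 else weight i ^+ 2 + weight j ^+ 2.
Proof.
move=> id jd; case: eqP => [->|ij]; first exact: sqdist_xx.
rewrite /sqdist -(sum_delta (weight i ^+ 2) id) -(sum_delta (weight j ^+ 2) jd).
rewrite -big_split /=.
apply: eq_bigr => l _; rewrite !mxE.
case: (eqVneq (l : nat) i) => [li|li]; case: (eqVneq (l : nat) j) => [lj|lj].
- by case: ij; rewrite -li -lj.
- by rewrite subr0 addr0.
- by rewrite sub0r sqrrN add0r.
- by rewrite subrr expr0n addr0.
Qed.

Lemma sqdist_basis0 i : (i < d)%N -> sqdist (basis_pt i) 0 = weight i ^+ 2.
Proof.
move=> id; rewrite /sqdist -(sum_delta (weight i ^+ 2) id); apply: eq_bigr => l _.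
by rewrite !mxE subr0; case: eqP => _ //; rewrite expr0n.
Qed.

Lemma basis_pt_inj : {in gtn d &, injective basis_pt}.
Proof.
move=> i j id _ /(congr1 (fun x : 'rV[R]_d => x ord0 (Ordinal id))).
rewrite !mxE /= eqxx; case: eqP => // _ wi0.
by have := weight_neq0 i; rewrite wi0 eqxx.
Qed.

Lemma size_weighted_basis : size weighted_basis = d.
Proof. by rewrite size_map size_iota. Qed.

Lemma nth_weighted_basis i : (i < d)%N -> nth 0 weighted_basis i = basis_pt i.
Proof. by move=> id; rewrite (nth_map 0%N) ?size_iota // nth_iota. Qed.

Lemma uniq_weighted_basis : uniq weighted_basis.
Proof.
rewrite map_inj_in_uniq ?iota_uniq // => i j.
by rewrite !mem_iota /= !add0n; apply: basis_pt_inj.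
Qed.

Definition heavy_centers : seq 'rV[R]_d := 0 :: [seq basis_pt j | j <- iota N K].

Lemma uniq_heavy_centers : uniq heavy_centers.
Proof.
rewrite /= map_inj_in_uniq ?iota_uniq ?andbT; last first.
  by move=> i j; rewrite !mem_iota => /andP[_ id] /andP[_ jd]; apply: basis_pt_inj.
apply/mapP => -[j]; rewrite mem_iota => /andP[_ jd].
move/(congr1 (fun x : 'rV[R]_d => x ord0 (Ordinal jd))).
by rewrite !mxE /= eqxx => /esym/eqP; apply/negP; exact: weight_neq0.
Qed.

(* Each light point costs [1] with respect to [heavy_centers], each heavy point
   [0]; hence [OPT_(K+1)] of the instance is at most [N]. *)
Lemma OPT_weighted_basis : OPT K.+1 weighted_basis <= N%:R.
Proof.
have size_hc : size heavy_centers = K.+1 by rewrite /= size_map size_iota.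
apply: le_trans (OPT_le_cost _ uniq_heavy_centers size_hc) _.
rewrite /cost big_map iotaD add0n big_cat.
rewrite -[leRHS]addr0 lerD //.
  rewrite -[X in X%:R](size_iota 0 N) -sum1_size natr_sum big_seq [leRHS]big_seq.
  apply: ler_sum => i; rewrite mem_iota => /andP[_ iN].
  apply: le_trans (cost_pt_le _ (mem_head _ _)) _.
  by rewrite sqdist_basis0 ?weight2 ?iN // ltn_addr.
rewrite big_seq big1 // => i; rewrite mem_iota => /andP[Ni id].
apply: cost_pt_mem; rewrite inE; apply/orP; right.
by apply: map_f; rewrite mem_iota Ni.
Qed.

End WeightedBasis.

Section PotentialFactor.
Variables (R : realType) (s : R).
Hypothesis s_gt0 : 0 < s.

(* [phi v = 1 - s / (3 (s + v))]: the potential is divided by [phi v] when one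
   of [v] unhit heavy points gets hit. *)
Definition phi (v : nat) : R := (3 * v%:R + 2 * s) / (3 * (s + v%:R)).

Lemma phi_gt0 v : 0 < phi v.
Proof.
have s0 := s_gt0; have v0 : 0 <= v%:R :> R by [].
by rewrite /phi divr_gt0 //; [lra | rewrite mulr_gt0 //; lra].
Qed.

Lemma phi_le1 v : phi v <= 1.
Proof.
have s0 := s_gt0; have v0 : 0 <= v%:R :> R by [].
by rewrite /phi ler_pdivrMr ?mulr_gt0 ?ltr_wpDr // mul1r; lra.
Qed.

(* One step of the potential: a hit (probability [P <= u / (u + s)]) divides it
   by [phi u], a miss multiplies it by [2 / 3]; on average it does not grow. *)
Lemma potential_step (P : R) (u : nat) : 0 <= P -> P <= u%:R / (u%:R + s) ->
  P * (phi u)^-1 + (1 - P) * (2 / 3) <= 1.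
Proof.
move=> P0; have u0 : 0 <= u%:R :> R by []; have s0 := s_gt0.
set U := u%:R => /[dup] Pu; rewrite ler_pdivlMr ?ltr_wpDl // => PUs.
have P1 : P <= 1 by apply: le_trans Pu _; rewrite ler_pdivrMr ?ltr_wpDl //; lra.
have den0 : 0 < 3 * U + 2 * s by rewrite ltr_wpDl ?mulr_ge0 ?mulr_gt0.
rewrite /phi invf_div.
have -> : P * (3 * (s + U) / (3 * U + 2 * s)) + (1 - P) * (2 / 3) =
          1 - (3 * U + 2 * s - P * (5 * s + 3 * U)) / (3 * (3 * U + 2 * s)).
  by field; rewrite gt_eqF.
rewrite lerBlDr lerDl divr_ge0 ?mulr_ge0 ?(ltW den0) // subr_ge0; nra.
Qed.

(* [phi v <= exp (- s / (3 (s + v))) <= exp (- (s / 3) ln ((s + v + 1) / (s + v)))]. *)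
Lemma phi_le_expR v : phi v <= expR (- (s / 3) * (ln (s + v.+1%:R) - ln (s + v%:R))).
Proof.
have sv0 : 0 < s + v%:R by rewrite ltr_wpDr.
have -> : phi v = 1 + - ((s / 3) * (s + v%:R)^-1) by rewrite /phi; field; rewrite gt_eqF.
apply: le_trans (expR_ge1Dx _) _; rewrite ler_expR mulNr lerN2.
apply: ler_wpM2l; first by rewrite divr_ge0 ?ltW.
rewrite -ln_div ?posrE ?(lt_le_trans sv0) ?lerD2l ?ler_nat //.
have -> : (s + v.+1%:R) / (s + v%:R) = 1 + (s + v%:R)^-1.
  by rewrite -natr1; field; rewrite gt_eqF.
by rewrite le_ln1Dx // (lt_le_trans (ltrN10 R)) ?invr_ge0 ?ltW.
Qed.

(* Telescoping [phi_le_expR]. *)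
Lemma prod_phi_le (a b : nat) : (a <= b)%N ->
  \prod_(a <= v < b) phi v <= expR (- (s / 3) * (ln (s + b%:R) - ln (s + a%:R))).
Proof.
elim: b => [|b IH]; first by rewrite leqn0 => /eqP->; rewrite big_geq // subrr mulr0 expR0.
rewrite leq_eqVlt => /orP[/eqP->|]; first by rewrite big_geq // subrr mulr0 expR0.
rewrite ltnS => ab; rewrite big_nat_recr //=.
have -> : - (s / 3) * (ln (s + b.+1%:R) - ln (s + a%:R)) =
          - (s / 3) * (ln (s + b%:R) - ln (s + a%:R)) +
          - (s / 3) * (ln (s + b.+1%:R) - ln (s + b%:R)) by ring.
rewrite expRD ler_pM ?IH ?phi_le_expR ?(ltW (phi_gt0 _)) //.
by apply: prodr_ge0 => v _; exact: ltW (phi_gt0 _).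
Qed.

End PotentialFactor.

(* [3/2 <= 1 + 1/2 <= exp (1/2)]. *)
Lemma three_halves_expn_le (R : realType) (n : nat) : (3 / 2 : R) ^+ n <= expR (n%:R / 2).
Proof.
rewrite expRM_natl lerXn2r ?nnegrE ?expR_ge0 //.
by apply: le_trans (expR_ge1Dx _); lra.
Qed.

Lemma ratio_le (R : realFieldType) (x a y b : R) :
  0 <= x <= a -> 0 < b <= y -> x / (x + y) <= a / (a + b).
Proof.
move=> /andP[x0 xa] /andP[b0 yb].
rewrite ler_pdivrMr ?ltr_wpDl ?(lt_le_trans b0) // mulrAC ler_pdivlMr ?ltr_wpDl //.
- nra.
- exact: le_trans xa.
Qed.

Definition approx_factor (R : realType) (k D : nat) : R := 8^-1 * ln (k%:R / D%:R).
Definition hit_scale (R : realType) (k D : nat) : R := Num.sqrt k%:R + D%:R.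

Section Threshold.
Variables (R : realType) (k D : nat).
Hypothesis D_ge1 : (1 <= D)%N.
Hypothesis D_lek : (D <= k)%N.
Local Notation L := (approx_factor R k D).
Local Notation s := (hit_scale R k D).

Lemma D_gt0 : 0 < D%:R :> R. Proof. by rewrite ltr0n. Qed.
Lemma k_ge_D : D%:R <= k%:R :> R. Proof. by rewrite ler_nat. Qed.

Lemma L_ge0 : 0 <= L.
Proof.
by rewrite mulr_ge0 // ln_ge0 // ler_pdivlMr ?D_gt0 // mul1r k_ge_D.
Qed.

Lemma L_lt_k : L < k%:R.
Proof.
have k_gt0 : 0 < k%:R :> R by apply: lt_le_trans D_gt0 k_ge_D.
have r_gt0 : 0 < k%:R / D%:R :> R by rewrite divr_gt0 ?D_gt0.
have D1 : 1 <= D%:R :> R by rewrite ler1n.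
have r_le : k%:R / D%:R <= k%:R :> R by rewrite ler_pdivrMr ?D_gt0 //; nra.
have r1 : -1 < k%:R / D%:R - 1 :> R by lra.
have := le_ln1Dx r1; rewrite addrC subrK /approx_factor; lra.
Qed.

Lemma s_ge1 : 1 <= s.
Proof.
have D1 : 1 <= D%:R :> R by rewrite ler1n.
by have := sqrtr_ge0 (k%:R : R); rewrite /hit_scale; lra.
Qed.

Lemma sqrt_k_ge1 : 1 <= Num.sqrt k%:R :> R.
Proof.
have k1 : 1 <= k%:R :> R by rewrite ler1n (leq_trans D_ge1).
by rewrite -[leLHS]sqrtr1; apply: ler_wsqrtr.
Qed.

Lemma hit_scale_le : s <= 2 * k%:R.
Proof.
have sqrt_le : Num.sqrt k%:R <= k%:R :> R.
  rewrite -[leRHS]sqr_sqrtr // expr2.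
  by apply: ler_peMr; [exact: sqrtr_ge0 | exact: sqrt_k_ge1].
have := k_ge_D; rewrite /hit_scale; lra.
Qed.

(* With [q = sqrt (k / D)]: [s q <= 2 k], because [sqrt k q <= k] and [D q <= k]. *)
Lemma scale_sqrt_ratio_le : s * Num.sqrt (k%:R / D%:R) <= 2 * k%:R.
Proof.
have D0 := D_gt0; have k0 : 0 < k%:R :> R := lt_le_trans D0 k_ge_D.
have r_le_k : k%:R / D%:R <= k%:R :> R.
  by rewrite ler_pdivrMr //; apply: ler_peMr; [exact: ltW | rewrite ler1n].
have sqrt_kk : Num.sqrt (k%:R * k%:R) = k%:R :> R.
  by rewrite -expr2 sqrtr_sqr ger0_norm // ltW.
have sqrt_D : D%:R * Num.sqrt (k%:R / D%:R) = Num.sqrt (D%:R * k%:R) :> R.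
  have -> : D%:R * k%:R = D%:R ^+ 2 * (k%:R / D%:R) :> R by field; rewrite gt_eqF.
  by rewrite (@sqrtrM _ (D%:R ^+ 2)) ?sqr_ge0 // sqrtr_sqr ger0_norm // ltW.
have -> : 2 * k%:R = k%:R + k%:R :> R by ring.
rewrite /hit_scale mulrDl; apply: lerD.
  by rewrite -sqrtrM ?ler0n // -[leRHS]sqrt_kk ler_wsqrtr // ler_pM2l.
by rewrite sqrt_D -[leRHS]sqrt_kk ler_wsqrtr // ler_pM2r ?k_ge_D.
Qed.

(* Since moreover [ln q = 4 L], when [s + u <= s (L + 1/2)] the log-gap
   [ln (s + k) - ln (s + u)] is at least [2 L]. *)
Lemma ln_gap_ge (u : nat) : s + u%:R <= s * (L + 2^-1) ->
  2 * L <= ln (s + k%:R) - ln (s + u%:R).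
Proof.
move=> su; have s1 := s_ge1; have L0 := L_ge0.
pose q := Num.sqrt (k%:R / D%:R) : R.
have q0 : 0 < q by rewrite sqrtr_gt0 divr_gt0 ?D_gt0 // (lt_le_trans D_gt0 k_ge_D).
have lnq : ln q = 4 * L.
  have r0 : 0 <= k%:R / D%:R :> R by rewrite divr_ge0.
  have : ln (q ^+ 2) = ln q *+ 2 by rewrite lnXn.
  by rewrite sqr_sqrtr // mulr2n /approx_factor => ->; field.
have sq := scale_sqrt_ratio_le; rewrite -/q in sq.
have su0 : 0 < s + u%:R by rewrite ltr_wpDr //; lra.
have sk0 : 0 < s + k%:R by have : 0 <= k%:R :> R by []; lra.
have L1 : 0 < 2 * L + 1 by lra.
have ln2L : ln (2 * L + 1) <= 2 * L by rewrite addrC le_ln1Dx //; lra.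
have prod_le : q * (s + u%:R) <= (s + k%:R) * (2 * L + 1).
  have : q * (s + u%:R) <= q * (s * (L + 2^-1)) by rewrite ler_pM2l.
  have : (s * q) * (L + 2^-1) <= (2 * k%:R) * (L + 2^-1) by rewrite ler_pM2r //; lra.
  have : 0 <= s * (2 * L + 1) by apply: mulr_ge0; lra.
  nra.
have : ln (q * (s + u%:R)) <= ln ((s + k%:R) * (2 * L + 1)).
  by rewrite ler_ln ?posrE ?mulr_gt0.
rewrite !lnM ?posrE //; lra.
Qed.

Lemma threshold_exponent (u : nat) : u%:R <= s * (L - 3 / 2) + 1 ->
  2 * L <= ln (s + k%:R) - ln (s + u%:R) ->
  (D + u)%:R / 2 - (s / 3) * (ln (s + k%:R) - ln (s + u%:R)) <= - Num.sqrt k%:R / 2.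
Proof.
move=> u_le gap; have s1 := s_ge1.
have s_def : s = Num.sqrt k%:R + D%:R by [].
have sqk1 := sqrt_k_ge1.
have D1 : 1 <= D%:R :> R by rewrite ler1n.
have sL0 : 0 <= s * L by rewrite mulr_ge0 ?L_ge0 // (le_trans ler01 s1).
have : (s / 3) * (2 * L) <= (s / 3) * (ln (s + k%:R) - ln (s + u%:R)).
  by rewrite ler_pM2l // divr_gt0 //; lra.
rewrite natrD; nra.
Qed.

End Threshold.

Section HardInstance.
Variables (R : realType) (k D : nat).
Hypothesis k_gt1 : (1 < k)%N.
Hypothesis D_ge1 : (1 <= D)%N.
Hypothesis D_lek : (D <= k)%N.
Local Notation L := (approx_factor R k D).
Local Notation s := (hit_scale R k D).

(* [spare] light points always stay unchosen among the first [2 k] centers. *)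
Definition spare : nat := (4 * k * k)%N.
Definition light : nat := (2 * k + spare)%N.
Definition heavy_sqnorm : R := spare%:R / s.
Definition instance : seq 'rV[R]_(light + k.-1) :=
  weighted_basis light k.-1 heavy_sqnorm.

Local Notation n := (size instance).
Local Notation A := heavy_sqnorm.
Local Notation pt := (basis_pt light k.-1 A).
Implicit Types (t : seq 'I_n) (i j : 'I_n).

Lemma s_gt0 : 0 < s. Proof. exact: lt_le_trans ltr01 (s_ge1 R k D_ge1). Qed.

Lemma A_mul_s : A * s = spare%:R.
Proof. by rewrite divfK // gt_eqF // s_gt0. Qed.

Lemma spare_ge : 2 * k%:R <= spare%:R :> R.
Proof. by rewrite -natrM ler_nat /spare; nia. Qed.

Lemma A_ge1 : 1 <= A.
Proof.
rewrite ler_pdivlMr ?s_gt0 // mul1r.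
exact: le_trans (hit_scale_le R D_ge1 D_lek) spare_ge.
Qed.

Lemma size_instance : n = (light + k.-1)%N.
Proof. exact: size_weighted_basis. Qed.

Lemma ord_lt (i : 'I_n) : (i < light + k.-1)%N.
Proof. by apply: leq_trans (ltn_ord i) _; rewrite size_instance. Qed.

Lemma nth_instance (i : 'I_n) : nth 0 instance i = pt i.
Proof. exact/nth_weighted_basis/ord_lt. Qed.

Definition unhit_heavy (t : seq 'I_n) (i : 'I_n) : bool := (light <= i)%N && (i \notin t).
Definition unhit (t : seq 'I_n) : nat := #|[pred i | unhit_heavy t i]|.

Lemma light_le_n : (light <= n)%N. Proof. by rewrite size_instance leq_addr. Qed.

Lemma n_sub_light : (n - light)%N = k.-1.
Proof. by rewrite size_instance addKn. Qed.

Lemma unhit_le t : (unhit t <= k.-1)%N.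
Proof.
rewrite -n_sub_light -(card_ord_ge light_le_n); apply: subset_leq_card.
by apply/fintype.subsetP => i; rewrite !inE => /andP[].
Qed.

Lemma unhit_nil : unhit [::] = k.-1.
Proof.
rewrite /unhit -[RHS]n_sub_light -(card_ord_ge light_le_n).
by apply: eq_card => i; rewrite !inE /unhit_heavy in_nil andbT.
Qed.

Lemma unhit_rcons t i : unhit (rcons t i) = (unhit t - unhit_heavy t i)%N.
Proof.
rewrite /unhit (cardD1 i [pred j | unhit_heavy t j]) inE addKn; apply: eq_card => j.
rewrite !inE /unhit_heavy mem_rcons inE.
by case: (j == i); rewrite ?andbF ?andbT //= ?andbT.
Qed.

Definition point_cost (t : seq 'I_n) (i : 'I_n) : R :=
  cost_pt (nth 0 instance i) (centers instance t).

Lemma cost_as_sum t : cost instance (centers instance t) = \sum_(i : 'I_n) point_cost t i.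
Proof. by rewrite /cost (big_nth 0) big_mkord. Qed.

Lemma point_cost_ge0 t i : 0 <= point_cost t i. Proof. exact: cost_pt_ge0. Qed.

Lemma point_cost_ge t i : t != [::] -> i \notin t -> 1 + weight light A i ^+ 2 <= point_cost t i.
Proof.
move=> t0 it; apply: cost_pt_ge; first by case: (t) t0.
move=> _ /mapP[j jt ->]; rewrite !nth_instance sqdist_basis ?ord_lt //.
case: eqP => [ij | _]; first by move: it; rewrite (val_inj ij) jt.
by rewrite addrC lerD2l weight2_ge1 // A_ge1.
Qed.

Lemma point_cost_le t i : t != [::] -> point_cost t i <= 2 * A.
Proof.
case: t => [//|j t] _; apply: le_trans (cost_pt_le _ (mem_head _ _)) _.
rewrite !nth_instance sqdist_basis ?ord_lt //; case: eqP => _.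
  by rewrite mulr_ge0 // (le_trans ler01 A_ge1).
by rewrite mulr2n mulrDl mul1r lerD // weight2_leA // A_ge1.
Qed.

Lemma light_cost_ge t : t != [::] -> (size t <= 2 * k)%N ->
  2 * spare%:R <= \sum_(i | ~~ unhit_heavy t i) point_cost t i.
Proof.
move=> t0 tk; pose P (i : 'I_n) := (i < light)%N && (i \notin t).
apply: le_trans (_ : \sum_(i | P i) 2 <= _).
  rewrite sumr_const -[leRHS]mulr_natr ler_wpM2l // ler_nat.
  apply: leq_trans (card_ord_lt_notin t light_le_n); rewrite /light.
  by rewrite -addnBAC ?leq_addl // leq_subLR addnC leq_add2l.
have light_in_rest : \sum_(i | P i) point_cost t i <= \sum_(i | ~~ unhit_heavy t i) point_cost t i.
  apply: ler_sum_subpred => [i /andP[iL _] | i _]; last exact: point_cost_ge0.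
  by rewrite /unhit_heavy negb_and -ltnNge iL.
apply: le_trans light_in_rest; apply: ler_sum => i /andP[_ it].
by apply: le_trans (point_cost_ge t0 it); have := weight2_ge1 light A_ge1 i; lra.
Qed.

Lemma unhit_cost_ge t : t != [::] -> A * (unhit t)%:R <= \sum_(i | unhit_heavy t i) point_cost t i.
Proof.
move=> t0; have -> : A * (unhit t)%:R = \sum_(i | unhit_heavy t i) A.
  by rewrite sumr_const mulr_natr.
apply: ler_sum => i /andP[heavy it]; apply: le_trans (point_cost_ge t0 it).
by rewrite (weight2 _ A_ge1) ltnNge heavy /= lerDr.
Qed.

Lemma unhit_cost_le t : t != [::] ->
  \sum_(i | unhit_heavy t i) point_cost t i <= 2 * A * (unhit t)%:R.
Proof.
move=> t0; have -> : 2 * A * (unhit t)%:R = \sum_(i | unhit_heavy t i) (2 * A).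
  by rewrite sumr_const mulr_natr.
by apply: ler_sum => i _; exact: point_cost_le.
Qed.

Lemma cost_lower_bound t : t != [::] -> (size t <= 2 * k)%N ->
  2 * spare%:R + A * (unhit t)%:R <= cost instance (centers instance t).
Proof.
move=> t0 tk; rewrite cost_as_sum (bigID (unhit_heavy t)) /= [leLHS]addrC.
by apply: lerD; [exact: unhit_cost_ge | exact: light_cost_ge].
Qed.

Lemma n_gt0 : 0 < n%:R :> R.
Proof.
rewrite ltr0n; apply: leq_trans light_le_n.
by rewrite /light addn_gt0 muln_gt0 (ltnW k_gt1).
Qed.

Lemma seed_step_instance t i : t != [::] ->
  seed_step instance (centers instance t) (nth 0 instance i) =
  point_cost t i / \sum_(j : 'I_n) point_cost t j.
Proof. by case: t => // j t _; rewrite -cost_as_sum. Qed.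

Lemma cost_gt0 t : t != [::] -> (size t <= 2 * k)%N -> 0 < \sum_(j : 'I_n) point_cost t j.
Proof.
move=> t0 tk; rewrite (bigID (unhit_heavy t)) /=.
have := light_cost_ge t0 tk; have : 0 <= \sum_(i | unhit_heavy t i) point_cost t i.
  by apply: sumr_ge0 => i _; exact: point_cost_ge0.
have : 0 < spare%:R :> R by rewrite ltr0n /spare !muln_gt0 (ltnW k_gt1).
lra.
Qed.

Lemma seed_step_sum t : (size t <= 2 * k)%N ->
  \sum_(i : 'I_n) seed_step instance (centers instance t) (nth 0 instance i) = 1.
Proof.
move=> tk; case: (eqVneq t [::]) => [-> | t0] /=.
  by rewrite sumr_const card_ord -[LHS]mulr_natl mulfV // gt_eqF // n_gt0.
under eq_bigr => i _ do rewrite seed_step_instance //.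
by rewrite -mulr_suml mulfV // gt_eqF // cost_gt0.
Qed.

Lemma hit_prob_le t : (size t <= 2 * k)%N ->
  \sum_(i | unhit_heavy t i) seed_step instance (centers instance t) (nth 0 instance i) <=
  (unhit t)%:R / ((unhit t)%:R + s).
Proof.
move=> tk; have s0 := s_gt0; have u0 : 0 <= (unhit t)%:R :> R by [].
case: (eqVneq t [::]) => [-> | t0] /=.
  have -> : \sum_(i | unhit_heavy [::] i) (n%:R)^-1 = (unhit [::])%:R / n%:R :> R.
    by rewrite sumr_const mulr_natl.
  have us0 : 0 < (unhit [::])%:R + s by have : 0 <= (unhit [::])%:R :> R by []; lra.
  apply: ler_wpM2l => //; rewrite lef_pV2 ?posrE ?n_gt0 //.
  rewrite unhit_nil size_instance natrD addrC lerD2r.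
  apply: le_trans (hit_scale_le R D_ge1 D_lek) _.
  by rewrite /light natrD natrM lerDl.
under eq_bigr => i _ do rewrite seed_step_instance //.
rewrite -mulr_suml [X in _ / X <= _](bigID (unhit_heavy t)) /=.
have hit0 : 0 <= \sum_(i | unhit_heavy t i) point_cost t i.
  by apply: sumr_ge0 => i _; exact: point_cost_ge0.
have spare0 : 0 < 2 * spare%:R :> R by rewrite mulr_gt0 // ltr0n /spare !muln_gt0 (ltnW k_gt1).
have A0 : 0 < A := lt_le_trans ltr01 A_ge1.
apply: le_trans (ratio_le (a := 2 * A * (unhit t)%:R) (b := 2 * spare%:R) _ _) _.
- by rewrite hit0 unhit_cost_le.
- by rewrite spare0 light_cost_ge.
have us : (unhit t)%:R + s != 0 by rewrite gt_eqF //; lra.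
have -> : 2 * A * (unhit t)%:R + 2 * spare%:R = (2 * A) * ((unhit t)%:R + s).
  by rewrite -A_mul_s; ring.
by rewrite -mulf_div divff ?mul1r // mulf_neq0 // gt_eqF.
Qed.

Definition damping (a : nat) : R := (2 / 3) ^+ (k - a) * \prod_(a <= v < k) phi s v.
Definition potential t : R := (2 / 3) ^+ size t / damping (unhit t).+1.

Lemma damping_gt0 a : 0 < damping a.
Proof.
rewrite mulr_gt0 ?exprn_gt0 //; apply: prodr_gt0 => v _; exact/phi_gt0/s_gt0.
Qed.

Lemma dampingS a : (a < k)%N -> damping a = 2 / 3 * phi s a * damping a.+1.
Proof.
move=> ak; rewrite /damping big_ltn // -(subnSK ak) exprS; ring.
Qed.

Lemma damping_le a b : (a <= b <= k)%N -> damping a <= damping b.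
Proof.
elim: b => [|b IH] /andP[ab bk]; first by move: ab; rewrite leqn0 => /eqP->.
move: ab; rewrite leq_eqVlt => /orP[/eqP-> // | ab].
apply: le_trans (IH _) _; first by rewrite -ltnS ab ltnW.
rewrite (dampingS bk) -[leRHS]mul1r ler_wpM2r ?(ltW (damping_gt0 _)) //.
by have := phi_le1 s_gt0 b; have := phi_gt0 s_gt0 b; nra.
Qed.

Lemma potential_ge0 t : 0 <= potential t.
Proof. by rewrite divr_ge0 ?exprn_ge0 // ltW // damping_gt0. Qed.

Lemma potential_nil : potential [::] = 1.
Proof.
rewrite /potential unhit_nil prednK ?(ltnW k_gt1) //.
by rewrite /damping subnn big_geq // expr0 !mul1r invr1.
Qed.

Lemma potential_rcons t i :
  potential (rcons t i) = potential t * (if unhit_heavy t i then (phi s (unhit t))^-1 else 2 / 3).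
Proof.
rewrite /potential unhit_rcons size_rcons exprS.
case: ifP => [hit_i | _]; last by rewrite subn0; ring.
have u_gt0 : (0 < unhit t)%N by rewrite /unhit (cardD1 i) inE hit_i.
have u_lt_k : (unhit t < k)%N.
  by apply: leq_ltn_trans (unhit_le t) _; rewrite prednK ?(ltnW k_gt1).
rewrite subn1 prednK // (dampingS u_lt_k).
have := damping_gt0 (unhit t).+1; have := phi_gt0 s_gt0 (unhit t).
by move=> /gt_eqF phi0 /gt_eqF damp0; field; rewrite phi0 damp0.
Qed.

Lemma potential_super t : (size t <= 2 * k)%N ->
  \sum_(i : 'I_n) seed_step instance (centers instance t) (nth 0 instance i) *
    potential (rcons t i) <= potential t.
Proof.
move=> tk; under eq_bigr => i _ do rewrite potential_rcons mulrCA.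
rewrite -mulr_sumr -[leRHS]mulr1 ler_wpM2l ?potential_ge0 //.
rewrite (bigID (unhit_heavy t)) /=.
under eq_bigr => i hit_i do rewrite hit_i.
under [X in _ + X]eq_bigr => i /negbTE miss_i do rewrite miss_i.
rewrite -!mulr_suml; have := seed_step_sum tk; rewrite (bigID (unhit_heavy t)) /=.
set P := \sum_(i | unhit_heavy t i) _ => total.
have -> : \sum_(i | ~~ unhit_heavy t i) seed_step instance (centers instance t) (nth 0 instance i)
          = 1 - P by rewrite -total addrC addrK.
apply: potential_step; first exact: s_gt0.
  by apply: sumr_ge0 => i _; exact: seed_step_ge0.
exact: hit_prob_le.
Qed.

Lemma OPT_instance : OPT k instance <= light%:R.
Proof. by have := OPT_weighted_basis light k.-1 A_ge1; rewrite prednK // ltnW. Qed.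

Lemma event_of_unhit t : t != [::] -> (size t <= 2 * k)%N ->
  s * (L - 3 / 2) <= (unhit t)%:R -> L * OPT k instance < cost instance (centers instance t).
Proof.
move=> t0 tk unhit_ge; have L0 := L_ge0 R D_ge1 D_lek; have Lk := L_lt_k R D_ge1 D_lek.
apply: le_lt_trans (_ : L * light%:R < _); first by rewrite ler_wpM2l // OPT_instance.
apply: lt_le_trans (cost_lower_bound t0 tk).
have heavy_cost : spare%:R * (L - 3 / 2) <= A * (unhit t)%:R.
  by rewrite -A_mul_s -mulrA ler_wpM2l // (le_trans ler01 A_ge1).
have k_L : 0 < k%:R * (k%:R - L) by rewrite mulr_gt0 ?subr_gt0 ?ltr0n ?(ltnW k_gt1).
move: heavy_cost; rewrite /light /spare natrD !natrM => heavy_cost.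
nra.
Qed.

(* The smallest integer above [s (L - 3/2)]: the number of unhit heavy points
   that guarantees the event. *)
Definition threshold : nat := (Num.truncn (s * (L - 3 / 2))).+1.

Lemma threshold_ge : s * (L - 3 / 2) <= threshold%:R.
Proof. exact/ltW/truncnS_gt. Qed.

Section LargeFactor.
Hypothesis L_ge : 3 / 2 <= L.

Lemma threshold_le : threshold%:R <= s * (L - 3 / 2) + 1.
Proof.
rewrite /threshold -natr1 lerD2r truncn_le mulr_ge0 ?(ltW s_gt0) //; have := L_ge; lra.
Qed.

Lemma threshold_gap : 2 * L <= ln (s + k%:R) - ln (s + threshold%:R).
Proof.
apply: (ln_gap_ge D_ge1 D_lek); have := threshold_le; have := s_ge1 R k D_ge1.
nra.
Qed.

Lemma threshold_lt_k : (threshold < k)%N.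
Proof.
rewrite ltnNge; apply/negP => k_le; have := threshold_gap; have := L_ge.
have : ln (s + k%:R) <= ln (s + threshold%:R).
  by rewrite ler_ln ?posrE ?lerD2l ?ler_nat // ltr_wpDr ?s_gt0.
lra.
Qed.

(* The value of the potential below which the event must have happened. *)
Definition threshold_potential : R := (2 / 3) ^+ (k + D) / damping threshold.

Lemma threshold_potential_gt0 : 0 < threshold_potential.
Proof. by rewrite divr_gt0 ?exprn_gt0 ?damping_gt0. Qed.

Lemma potential_ge_threshold t : size t = (k + D)%N -> (unhit t < threshold)%N ->
  threshold_potential <= potential t.
Proof.
move=> tkD u_lt; rewrite /potential tkD ler_pM2l ?exprn_gt0 //.
rewrite lef_pV2 ?posrE ?damping_gt0 // damping_le // u_lt.
exact: ltnW threshold_lt_k.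
Qed.

(* [1 / threshold_potential = (3/2)^(D + u) prod_(u <= v < k) phi v] with
   [u = threshold], which is at most [exp (- sqrt k / 2)]. *)
Lemma threshold_potential_inv : threshold_potential^-1 <= expR (- Num.sqrt k%:R / 2).
Proof.
have u_le := ltnW threshold_lt_k; set u := threshold in u_le *.
have split_pow : (k + D = (k - u) + (D + u))%N by lia.
have -> : threshold_potential^-1 = (3 / 2) ^+ (D + u) * \prod_(u <= v < k) phi s v.
  rewrite invf_div /damping split_pow exprD.
  have -> : (3 / 2 : R) = (2 / 3)^-1 by rewrite invf_div.
  by rewrite exprVn; field; rewrite !expf_neq0.
apply: le_trans (ler_pM _ _ (three_halves_expn_le R (D + u)) (prod_phi_le s_gt0 u_le)) _.
- by rewrite exprn_ge0.
- by apply: prodr_ge0 => v _; exact/ltW/phi_gt0/s_gt0.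
rewrite mulNr -expRD ler_expR.
exact: (threshold_exponent D_ge1 D_lek threshold_le threshold_gap).
Qed.

End LargeFactor.

Lemma full_prefix t : size t = (k + D)%N -> t != [::] /\ (size t <= 2 * k)%N.
Proof. by move=> tkD; split; [apply/eqP => t0 | ]; move: tkD; rewrite ?t0 /=; lia. Qed.

(* The instance satisfies the bound of the theorem: by Markov's inequality for
   the potential, with the threshold [exp (sqrt k / 2)] when [L < 3/2] (the event
   is then sure) and [threshold_potential] otherwise. *)
Lemma kmpp_instance_bound :
  1 - expR (- Num.sqrt k%:R / 2) <=
  kmpp_prob instance (k + D) (fun C => L * OPT k instance < cost instance C).
Proof.
have short t : (size t < k + D)%N -> (size t <= 2 * k)%N by lia.
have mass t tkD := seed_step_sum (short t tkD).
have super t tkD := potential_super (short t tkD).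
have event t : size t = (k + D)%N -> s * (L - 3 / 2) <= (unhit t)%:R ->
    L * OPT k instance < cost instance (centers instance t).
  by move=> /full_prefix[t0 tk]; exact: event_of_unhit.
case: (ltrP L (3 / 2)) => L_cmp.
  have -> : expR (- Num.sqrt k%:R / 2) = potential [::] / expR (Num.sqrt k%:R / 2).
    by rewrite potential_nil mul1r mulNr expRN.
  apply: kmpp_markov; [exact: expR_gt0 | exact: potential_ge0 | exact: mass | exact: super |].
  move=> t; rewrite event ?size_tuple //.
  have : s * (L - 3 / 2) <= 0 by rewrite mulr_ge0_le0 ?subr_le0 ?ltW ?s_gt0.
  by move/le_trans; apply.
apply: le_trans (_ : 1 - potential [::] / threshold_potential <= _).
  rewrite potential_nil mul1r lerD2l lerN2; exact: threshold_potential_inv.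
apply: kmpp_markov; [exact: threshold_potential_gt0 | exact: potential_ge0 | exact: mass |
  exact: super |].
move=> t; case: (ltnP (unhit t) threshold) => [u_lt _ | u_ge].
  by apply: potential_ge_threshold; rewrite ?size_tuple.
rewrite event ?size_tuple //; apply: le_trans threshold_ge _; by rewrite ler_nat.
Qed.

End HardInstance.

Theorem mainTheorem17 (R : realType) (k Delta : nat) :
  (1 < k)%N -> (1 <= Delta <= k)%N ->
  exists (d : nat) (X : seq 'rV[R]_d),
    uniq X /\
    1 - expR (- Num.sqrt (k%:R) / 2) <=
      kmpp_prob X (k + Delta)
        (fun C => 8^-1 * ln (k%:R / Delta%:R) * OPT k X < cost X C).
Proof.
move=> k_gt1 /andP[D_ge1 D_lek]; exists (light k + k.-1)%N, (instance R k Delta).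
split; first exact/uniq_weighted_basis/(A_ge1 R k_gt1 D_ge1 D_lek).
exact: (kmpp_instance_bound R k_gt1 D_ge1 D_lek).
Qed.
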